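(* Let $\alpha,\beta\in\mathbb F_q^*$. For nonempty words $\mathfrak a,\mathfrak b\in\langle\Sigma\rangle$, $\varphi_\alpha(\mathfrak a)\diamond\varphi_\beta(\mathfrak b)=\varphi_{\alpha\beta}(\mathfrak a\diamond\mathfrak b)$; and for nonempty words $\mathfrak a,\mathfrak b\in\langle\Gamma\rangle$, also $\varphi_\alpha(\mathfrak a)\diamond\varphi_\beta(\mathfrak b)=\varphi_{\alpha\beta}(\mathfrak a\diamond\mathfrak b)$.
   Context: Let $q$ be a prime power. For positive integers $r,s,j$ put $\Delta^j_{r,s}=(-1)^{r-1}\binom{j-1}{r-1}+(-1)^{s-1}\binom{j-1}{s-1}$ if $(q-1)\mid j$ and $0$ otherwise. Let $\Sigma=\{x_n\}_{n\in\mathbb N}$ and $\Gamma=\{x_{n,\varepsilon}\}_{n\in\mathbb N,\varepsilon\in\mathbb F_q^*}$ be alphabets, $\langle\Sigma\rangle,\langle\Gamma\rangle$ their sets of words (empty word $1$, juxtaposition = concatenation), and $\mathfrak C$, $\mathfrak D$ the $\mathbb F_q$-vector spaces with bases $\langle\Sigma\rangle$, $\langle\Gamma\rangle$. A word of $\langle\Sigma\rangle$ is identified with the word of $\langle\Gamma\rangle$ obtained by giving every letter character $1$ ($x_n\leftrightarrow x_{n,1}$). On $\mathfrak D$ bilinear products are defined recursively by $1\diamond\mathfrak a=\mathfrak a\diamond1=\mathfrak a$, $1\sqcup\!\sqcup\mathfrak a=\mathfrak a\sqcup\!\sqcup1=\mathfrak a$ and, for nonempty $\mathfrak a=x_{a,\alpha}\mathfrak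 a_-$, $\mathfrak b=x_{b,\beta}\mathfrak b_-$: $\mathfrak a\diamond\mathfrak b=x_{a+b,\alpha\beta}(\mathfrak a_-\sqcup\!\sqcup\mathfrak b_-)+\sum_{i+j=a+b}\Delta^j_{a,b}x_{i,\alpha\beta}(x_{j,1}\sqcup\!\sqcup(\mathfrak a_-\sqcup\!\sqcup\mathfrak b_-))$, $\mathfrak a\sqcup\!\sqcup\mathfrak b=x_{a,\alpha}(\mathfrak a_-\sqcup\!\sqcup\mathfrak b)+x_{b,\beta}(\mathfrak a\sqcup\!\sqcup\mathfrak b_-)+\mathfrak a\diamond\mathfrak b$; on $\mathfrak C$ by the same recursion without characters. For $\alpha\in\mathbb F_q^*$, the horizontal map $\varphi_\alpha:\mathfrak C\to\mathfrak D$ is linear with $\varphi_\alpha(1)=1$, $\varphi_\alpha(x_{i_1}x_{i_2}\cdots x_{i_n})=x_{i_1,\alpha}x_{i_2,1}\cdots x_{i_n,1}$; it is extended to $\varphi_\alpha:\mathfrak D\to\mathfrak D$ by $\varphi_\alpha(1)=1$ and $\varphi_\alpha(x_{u,\varepsilon}\mathfrak u_-)=x_{u,\alpha\varepsilon}\mathfrak u_-$. *)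

From mathcomp Require Import all_boot all_algebra.
Set Implicit Arguments. Unset Strict Implicit. Unset Printing Implicit Defensive.
Import GRing.Theory.
Local Open Scope ring_scope.

Section Defs.
Variable F : finFieldType.

Definition Delta (r s j : nat) : F :=
  if ((#|F|).-1 %| j)%N then
    (-1) ^+ r.-1 * ('C(j.-1, r.-1))%:R + (-1) ^+ s.-1 * ('C(j.-1, s.-1))%:R
  else 0.

(* letter x_{n,eps} is the pair (n, eps) *)
Definition gword := seq (nat * F).
(* an element of D is a finite formal linear combination of words *)
Definition gvec := seq (F * gword).
(* coefficient of the basis word w in v; elements of D are equal iff all
   coefficients agree *)
Definition gcoef (v : gvec) (w : gword) : F := \sum_(p <- v | p.2 == w) p.1.
Definition gscale (c : F) (v : gvec) : gvec := map (fun p => (c * p.1, p.2)) v.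
Definition gcons (x : nat * F) (v : gvec) : gvec := map (fun p => (p.1, x :: p.2)) v.
Definition gbilin (f : gword -> gvec) (v : gvec) : gvec :=
  flatten (map (fun p => gscale p.1 (f p.2)) v).

(* the diamond recursion step for a = x a_-, b = y b_-, given a shuffle [sh] *)
Definition gdia_step (sh : gword -> gword -> gvec) (x : nat * F) (a' : gword)
    (y : nat * F) (b' : gword) : gvec :=
  let S := sh a' b' in
  let a := x.1 in let b := y.1 in let e := x.2 * y.2 in
  gcons ((a + b)%N, e) S ++
  flatten [seq gscale (Delta a b j)
                 (gcons ((a + b - j)%N, e) (gbilin (sh [:: (j, 1)]) S))
          | j <- iota 1 (a + b).-1].

(* shuffle with fuel (fuel > total length suffices) *)
Fixpoint gsh (n : nat) (a b : gword) : gvec :=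
  match n with
  | 0 => [::]
  | n'.+1 =>
    match a, b with
    | [::], _ => [:: (1, b)]
    | _, [::] => [:: (1, a)]
    | x :: a', y :: b' =>
        gcons x (gsh n' a' b) ++ gcons y (gsh n' a b') ++ gdia_step (gsh n') x a' y b'
    end
  end.

Definition gshuffle (a b : gword) : gvec := gsh (size a + size b).+1 a b.

Definition gdiamond (a b : gword) : gvec :=
  match a, b with
  | [::], _ => [:: (1, b)]
  | _, [::] => [:: (1, a)]
  | x :: a', y :: b' => gdia_step (gsh (size a + size b)) x a' y b'
  end.

Definition cword := seq nat.
Definition cvec := seq (F * cword).
Definition cscale (c : F) (v : cvec) : cvec := map (fun p => (c * p.1, p.2)) v.
Definition ccons (x : nat) (v : cvec) : cvec := map (fun p => (p.1, x :: p.2)) v.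
Definition cbilin (f : cword -> cvec) (v : cvec) : cvec :=
  flatten (map (fun p => cscale p.1 (f p.2)) v).

Definition cdia_step (sh : cword -> cword -> cvec) (a : nat) (a' : cword)
    (b : nat) (b' : cword) : cvec :=
  let S := sh a' b' in
  ccons (a + b)%N S ++
  flatten [seq cscale (Delta a b j) (ccons (a + b - j)%N (cbilin (sh [:: j]) S))
          | j <- iota 1 (a + b).-1].

Fixpoint csh (n : nat) (a b : cword) : cvec :=
  match n with
  | 0 => [::]
  | n'.+1 =>
    match a, b with
    | [::], _ => [:: (1, b)]
    | _, [::] => [:: (1, a)]
    | x :: a', y :: b' =>
        ccons x (csh n' a' b) ++ ccons y (csh n' a b') ++ cdia_step (csh n') x a' y b'
    end
  end.

Definition cshuffle (a b : cword) : cvec := csh (size a + size b).+1 a b.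

Definition cdiamond (a b : cword) : cvec :=
  match a, b with
  | [::], _ => [:: (1, b)]
  | _, [::] => [:: (1, a)]
  | x :: a', y :: b' => cdia_step (csh (size a + size b)) x a' y b'
  end.

Definition phiC (al : F) (w : cword) : gword :=
  match w with
  | [::] => [::]
  | n :: w' => (n, al) :: map (fun m => (m, 1)) w'
  end.
Definition phiCv (al : F) (v : cvec) : gvec := map (fun p => (p.1, phiC al p.2)) v.

Definition phiG (al : F) (w : gword) : gword :=
  match w with
  | [::] => [::]
  | x :: w' => (x.1, al * x.2) :: w'
  end.
Definition phiGv (al : F) (v : gvec) : gvec := map (fun p => (p.1, phiG al p.2)) v.

Definition cvalid (w : cword) : bool := all (fun n => 0 < n)%N w.
Definition gvalid (w : gword) : bool := all (fun x => (0 < x.1)%N && (x.2 != 0)) w.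

End Defs.

From mathcomp Require Import all_boot all_algebra.
Import GRing.Theory.
Local Open Scope ring_scope.

(* The diamond product sees the characters of its arguments only through the
   product of the characters of their first letters, which it puts on the first
   letter of every word it produces; everything else comes from shuffles of the
   tails.  Twisting the first characters by al and be therefore twists the
   result by al * be.  For Sigma-words the tails carry character 1, and the
   shuffle of character-one words is the character-one image of the shuffle in
   C, which reduces the Sigma case to the Gamma one.  Both identities hold as
   equalities of formal sums, for all words and characters. *)

Section HorizontalMaps.
Variable F : finFieldType.

Definition gword_of (w : cword) : gword F := map (fun m => (m, 1)) w.
Definition gvec_of (v : cvec F) : gvec F := map (fun p => (p.1, gword_of p.2)) v.

Lemma gcons_gvec_of n (v : cvec F) : gcons (n, 1) (gvec_of v) = gvec_of (ccons n v).
Proof. by elim: v => [|p v IH] //=; rewrite IH. Qed.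

Lemma gscale_gvec_of c (v : cvec F) : gscale c (gvec_of v) = gvec_of (cscale c v).
Proof. by elim: v => [|p v IH] //=; rewrite IH. Qed.

Lemma gbilin_gvec_of f g (v : cvec F) :
  (forall w, f (gword_of w) = gvec_of (g w)) ->
  gbilin f (gvec_of v) = gvec_of (cbilin g v).
Proof.
move=> fg; elim: v => [|p v IH] //=; rewrite /gbilin /cbilin /= in IH *.
by rewrite fg gscale_gvec_of IH /gvec_of map_cat.
Qed.

Lemma gdia_step_gvec_of sh sh' :
  (forall u v, sh (gword_of u) (gword_of v) = gvec_of (sh' u v)) ->
  forall n a' m b', gdia_step sh (n, 1) (gword_of a') (m, 1) (gword_of b')
  = gvec_of (cdia_step sh' n a' m b').
Proof.
move=> shE n a' m b'; rewrite /gdia_step /cdia_step /= mulr1 shE gcons_gvec_of.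
rewrite /gvec_of map_cat -/gvec_of; congr (_ ++ _).
rewrite map_flatten -map_comp; congr flatten; apply: eq_map => j /=.
rewrite (@gbilin_gvec_of _ (sh' [:: j])) ?gcons_gvec_of ?gscale_gvec_of //.
exact: shE [:: j].
Qed.

Lemma gsh_gvec_of k (u v : cword) :
  gsh k (gword_of u) (gword_of v) = gvec_of (csh F k u v).
Proof.
elim: k u v => [|k IH] [|n u'] [|m v'] //=.
rewrite -[(n, 1) :: _]/(gword_of (n :: u')) -[(m, 1) :: _]/(gword_of (m :: v')).
by rewrite !IH !gcons_gvec_of (gdia_step_gvec_of _ _ IH) /gvec_of !map_cat.
Qed.

Lemma phiGv_gvec_of c (v : cvec F) : phiGv c (gvec_of v) = phiCv c v.
Proof. by elim: v => [|[d [|n w]] v IH] //=; rewrite IH ?mulr1. Qed.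

Lemma phiGvM c d (v : gvec F) : phiGv c (phiGv d v) = phiGv (c * d) v.
Proof. by elim: v => [|[e [|x w]] v IH] //=; rewrite IH ?mulrA. Qed.

Lemma phiGv_gcons c n e (v : gvec F) :
  phiGv c (gcons (n, e) v) = gcons (n, c * e) v.
Proof. by elim: v => [|p v IH] //=; rewrite IH. Qed.

Lemma phiGv_gscale c d (v : gvec F) : phiGv c (gscale d v) = gscale d (phiGv c v).
Proof. by elim: v => [|p v IH] //=; rewrite IH. Qed.

Lemma gdia_step_chars (sh : gword F -> gword F -> gvec F) n (e : F) a' m f b' :
  gdia_step sh (n, e) a' (m, f) b'
  = phiGv (e * f) (gdia_step sh (n, 1) a' (m, 1) b').
Proof.
rewrite /gdia_step /= mulr1 /phiGv map_cat -/(phiGv _ _) phiGv_gcons mulr1.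
congr (_ ++ _); rewrite map_flatten -map_comp; congr flatten.
by apply: eq_map => j /=; rewrite -/(phiGv _ _) phiGv_gscale phiGv_gcons mulr1.
Qed.

Lemma gdiamond_cons (x : nat * F) a y b :
  gdiamond (x :: a) (y :: b)
  = gdia_step (gsh (size (x :: a) + size (y :: b))) x a y b.
Proof. by []. Qed.

Lemma cdiamond_cons n a m b :
  cdiamond F (n :: a) (m :: b)
  = cdia_step (csh F (size (n :: a) + size (m :: b))) n a m b.
Proof. by []. Qed.

Lemma gdiamond_phiC al be n a' m b' :
  gdiamond (phiC al (n :: a')) (phiC be (m :: b'))
  = phiCv (al * be) (cdiamond F (n :: a') (m :: b')).
Proof.
(* Simplify only the fuel: a plain [/=] would unfold the shuffles. *)
rewrite gdiamond_cons cdiamond_cons [X in gsh X]/= [X in csh _ X]/= !size_map.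
by rewrite gdia_step_chars (gdia_step_gvec_of _ _ (gsh_gvec_of _)) phiGv_gvec_of.
Qed.

Lemma gdiamond_phiG (al be : F) x a' y b' :
  gdiamond (phiG al (x :: a')) (phiG be (y :: b'))
  = phiGv (al * be) (gdiamond (x :: a') (y :: b')).
Proof.
case: x y => [n e] [m f]; rewrite !gdiamond_cons.
by rewrite [LHS]gdia_step_chars [in RHS]gdia_step_chars phiGvM mulrACA.
Qed.

End HorizontalMaps.

Theorem lemma5p4 (F : finFieldType) (al be : F) :
  al != 0 -> be != 0 ->
  (forall a b : cword, a != [::] -> b != [::] -> cvalid a -> cvalid b ->
     forall w : gword F,
       gcoef (gdiamond (phiC al a) (phiC be b)) w
       = gcoef (phiCv (al * be) (cdiamond F a b)) w)
  /\
  (forall a b : gword F, a != [::] -> b != [::] -> gvalid a -> gvalid b ->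
     forall w : gword F,
       gcoef (gdiamond (phiG al a) (phiG be b)) w
       = gcoef (phiGv (al * be) (gdiamond a b)) w).
Proof.
move=> _ _; split.
- by case=> [|n a'] // [|m b'] // _ _ _ _ w; rewrite gdiamond_phiC.
- by case=> [|x a'] // [|y b'] // _ _ _ _ w; rewrite gdiamond_phiG.
Qed.
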